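(* In the discrete scheme described in the context, let $M'=\max_j|\theta^n_j|+\max_j|q^n_j|$. There is a constant $C>0$ depending only on $M'$, $T$ and $Q^{sat}$ such that for all $s<t$ in $[0,T)$ and all $z\in[0,1)$, $$(F^n(t,z)-F^n(s,z))^+\le C\big(\hat\theta^n(t,z)-\hat\theta^n(s,z)\big).$$
   Context: $Q^{sat}:\mathbb{R}^3\to\mathbb{R}$ is smooth with $\partial_\theta Q^{sat}>0$, $\partial_zQ^{sat}<0$. $\Theta(w,z,t)$ is the solution $\theta$ of $\theta+Q^{sat}(\theta,z,t)=w$ (assumed well defined), with $\partial_w\Theta>0$, $\partial_z\Theta>0$. Discrete scheme. Fix $T>0$, $n\ge1$, $\delta t>0$, $z_i=i/n$, $J_i=[\frac{i-1}n,\frac in)$. There are $n$ parcels $j=1,\dots,n$; initially parcel $j$ is at position $j$ with value $\theta^n_j$, where $\theta^n_1\le\dots\le\theta^n_n$ and $q^n_j\le Q^{sat}(\theta^n_j,z_j,0)$; parcel $j$ carries the fixed number $\theta^M_j=\theta^n_j+q^n_j$. One time step from $k\delta t$ to $(k+1)\delta t$, with $\tau=(k+1)\delta t$: positions $m=n,\dots,1$ are processed in this order. At stage $m$, with current configuration (parcel $p(i)$ at position $i$ with value $\vartheta_i$), position $i$ is wet if $\vartheta_i<\Theta(\theta^M_{p(i)},z_i,\tau)$; a wet position $i_0\le m$ is eligible if for every $i$ with $i_0<i\le m$, either $i$ is not wet and $\vartheta_i<\Theta(\theta^M_{p(i_0)},z_i,\tau)$, or $i$ is wet and $\theta^M_{p(i_0)}>\theta^M_{p(i)}$.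 If some position is eligible, let $i_*$ be the eligible position whose parcel has the largest $\theta^M$ (largest position in case of ties); that parcel moves to position $m$ with new value $\Theta(\theta^M_{p(i_* )},z_m,\tau)$, the parcels at $i_*+1,\dots,m$ move down one position keeping their values, others unchanged; otherwise nothing changes. After stage $1$ one has the configuration at time $(k+1)\delta t$. $\alpha_{k\delta t}(j)$ is the position of parcel $j$ after $k$ steps, $\theta^n_i(k\delta t)$ the value at position $i$. For $k\delta t\le t<(k+1)\delta t$ and $z\in J_j$: $\theta^n(t,z)=\theta^n_j(k\delta t)$, $F^n(t,z)=z-z_j+z_{\alpha_{k\delta t}(j)}$, and $\hat\theta^n(t,z)=\theta^n(t,F^n(t,z))$. *)

From Stdlib Require Import Reals Lra Lia List Arith.
From Coquelicot Require Import Coquelicot.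
Import ListNotations.
Open Scope bool_scope.
Open Scope R_scope.

Definition cont3 (f : R -> R -> R -> R) : Prop :=
  forall x y w : R,
    continuous (fun p : R * R * R => f (fst (fst p)) (snd (fst p)) (snd p)) (x, y, w).

Fixpoint Ck (k : nat) (f : R -> R -> R -> R) : Prop :=
  match k with
  | O => cont3 f
  | S k' => cont3 f /\
      exists f1 f2 f3 : R -> R -> R -> R,
        (forall x y w, is_derive (fun a => f a y w) x (f1 x y w)) /\
        (forall x y w, is_derive (fun a => f x a w) y (f2 x y w)) /\
        (forall x y w, is_derive (fun a => f x y a) w (f3 x y w)) /\
        Ck k' f1 /\ Ck k' f2 /\ Ck k' f3
  end.

Definition smooth3 (f : R -> R -> R -> R) : Prop := forall k, Ck k f.

(* positions are 1..n ; z_i = i/n *)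
Definition zpos (n i : nat) : R := INR i / INR n.

(* configuration: par i = parcel at position i, val i = value at position i *)
Record config := mkcfg { par : nat -> nat; val : nat -> R }.

Definition ltbR (x y : R) : bool := if Rlt_dec x y then true else false.

Section Scheme.
Variables (Theta : R -> R -> R -> R) (n : nat) (dt : R) (th0 q : nat -> R).

Definition thM (j : nat) : R := th0 j + q j.

Definition wet (tau : R) (c : config) (i : nat) : bool :=
  ltbR (val c i) (Theta (thM (par c i)) (zpos n i) tau).

Definition eligible (tau : R) (c : config) (m i0 : nat) : bool :=
  wet tau c i0 &&
  forallb (fun i =>
     (negb (wet tau c i) && ltbR (val c i) (Theta (thM (par c i0)) (zpos n i) tau))
     || (wet tau c i && ltbR (thM (par c i)) (thM (par c i0))))
    (seq (S i0) (m - i0)).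

(* eligible position with largest theta^M, ties broken by largest position *)
Definition select (tau : R) (c : config) (m : nat) : option nat :=
  fold_left (fun acc i =>
     if eligible tau c m i then
       match acc with
       | None => Some i
       | Some j => if Rle_dec (thM (par c j)) (thM (par c i)) then Some i else acc
       end
     else acc) (seq 1 m) None.

Definition move (c : config) (istar m : nat) (newv : R) : config :=
  mkcfg
    (fun i => if orb (i <? istar)%nat (m <? i)%nat then par c i
              else if (i =? m)%nat then par c istar else par c (S i))
    (fun i => if orb (i <? istar)%nat (m <? i)%nat then val c i
              else if (i =? m)%nat then newv else val c (S i)).

Definition stage (tau : R) (c : config) (m : nat) : config :=
  match select tau c m with
  | None => c
  | Some is => move c is m (Theta (thM (par c is)) (zpos n m) tau)
  end.

Fixpoint run_stages (tau : R) (c : config) (m : nat) : config :=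
  match m with
  | O => c
  | S m' => run_stages tau (stage tau c (S m')) m'
  end.

Definition init_cfg : config := mkcfg (fun i => i) th0.

Fixpoint cfg_at (k : nat) : config :=
  match k with
  | O => init_cfg
  | S k' => run_stages (INR (S k') * dt) (cfg_at k') n
  end.

Definition alpha (c : config) (j : nat) : nat :=
  fold_right (fun i acc => if (par c i =? j)%nat then i else acc) O (seq 1 n).

Definition kidx (t : R) : nat := Z.to_nat (Int_part (t / dt)).

(* index j with z in J_j = [(j-1)/n, j/n) *)
Definition cell (z : R) : nat := S (Z.to_nat (Int_part (INR n * z))).

Definition theta_n (t z : R) : R := val (cfg_at (kidx t)) (cell z).

Definition F_n (t z : R) : R :=
  z - zpos n (cell z) + zpos n (alpha (cfg_at (kidx t)) (cell z)).

Definition theta_hat (t z : R) : R := theta_n t (F_n t z).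

Definition Mprime : R :=
  fold_right Rmax 0 (map (fun j => Rabs (th0 j)) (seq 1 n))
  + fold_right Rmax 0 (map (fun j => Rabs (q j)) (seq 1 n)).

End Scheme.

From Stdlib Require Import Reals Lra Lia List ZArith ClassicalEpsilon Classical.
From Coquelicot Require Import Coquelicot.
Open Scope R_scope.

(* The implicit solution [Theta] of [Theta + Q(Theta, z, t) = w] increases in [z]
   at a uniform rate: the mean value theorem gives
   [(1 + dQ/dtheta) (Theta(z2) - Theta(z1)) = - dQ/dz (z2 - z1)], and on the
   compact set where the data live [dQ/dtheta] is bounded above and [- dQ/dz]
   below, so [Theta(z2) - Theta(z1) >= k (z2 - z1)] for some [k > 0] depending
   only on [M'], [T] and [Q].
   In a stage of the scheme only the selected parcel moves up, from [istar] to
   [m]; being wet there, its old value is below [Theta(thM, z_istar)], which is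
   at least [k (z_m - z_istar)] below its new value [Theta(thM, z_m)]. The other
   parcels keep their values and move down. Composing over stages and time
   steps, every parcel gains at least [k] times its upward displacement, which
   is the claim with [C = 1/k]. *)

Lemma cont3_ball (g : R -> R -> R -> R) (Hg : cont3 g) (x y w : R) (eps : posreal) :
  exists d : posreal, forall x' y' w', Rabs (x' - x) < d -> Rabs (y' - y) < d ->
    Rabs (w' - w) < d -> Rabs (g x' y' w' - g x y w) < eps.
Proof.
  destruct (Hg x y w (ball (g x y w) eps) (locally_ball _ eps)) as [d Hd].
  exists d; intros x' y' w' Hx Hy Hw.
  exact (Hd (x', y', w') (conj (conj Hx Hy) Hw)).
Qed.

Lemma fold_Rmax_ge (x : R) (l : list R) : In x l -> x <= fold_right Rmax 0 l.
Proof.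
  induction l as [|a l IH]; simpl; [tauto|]. intros [<-|H].
  - apply Rmax_l.
  - eapply Rle_trans; [apply IH; exact H| apply Rmax_r].
Qed.

(* A finite subcover of the cube by the balls on which [g] varies by less
   than 1 bounds [g] by 1 plus its maximum over the centres. *)
Lemma cont3_bounded_on_cube (g : R -> R -> R -> R) (Hg : cont3 g) (r : R) :
  exists K, 0 < K /\ forall x y w, Rabs x <= r -> Rabs y <= r -> Rabs w <= r ->
    Rabs (g x y w) <= K.
Proof.
  set (delta := fun t : Compactness.Tn 3 R => let '(x, (y, (w, _))) := t in
    proj1_sig (constructive_indefinite_description _
      (cont3_ball g Hg x y w (mkposreal 1 Rlt_0_1)))).
  set (g3 := fun t : Compactness.Tn 3 R => let '(x, (y, (w, _))) := t in g x y w).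
  apply NNPP; intro Hno.
  apply (Compactness.compactness_list 3 (-r, (-r, (-r, tt))) (r, (r, (r, tt))) delta).
  intros [l Hl]; apply Hno.
  set (M := fold_right Rmax 0 (map (fun t => Rabs (g3 t)) l)).
  exists (Rabs M + 1); split; [pose proof (Rabs_pos M); lra|].
  intros x y w Hx Hy Hw.
  apply Rabs_le_between in Hx, Hy, Hw.
  destruct (Hl (x, (y, (w, tt)))) as [[t1 [t2 [t3 []]]] [Hin [_ Hclose]]];
    [simpl; tauto|].
  cbv beta iota zeta delta [delta] in Hclose; revert Hclose.
  destruct (constructive_indefinite_description _
    (cont3_ball g Hg t1 t2 t3 (mkposreal 1 Rlt_0_1))) as [d Hd].
  simpl; intros [C1 [C2 [C3 _]]].
  pose proof (Hd x y w C1 C2 C3) as Hnear.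
  pose proof (fold_Rmax_ge _ _ (in_map (fun t => Rabs (g3 t)) _ _ Hin)) as Hmax.
  fold M in Hmax; change (g3 (t1, (t2, (t3, tt)))) with (g t1 t2 t3) in Hmax.
  pose proof (Rle_abs M).
  pose proof (Rabs_triang_inv (g x y w) (g t1 t2 t3)). simpl in Hnear. lra.
Qed.

Lemma cont3_neg_bounded_away (g : R -> R -> R -> R) (r : R) :
  cont3 g -> (forall x y w, g x y w < 0) ->
  exists m, 0 < m /\ forall x y w, Rabs x <= r -> Rabs y <= r -> Rabs w <= r -> m <= - g x y w.
Proof.
  intros Hg Hneg.
  assert (Hinv : cont3 (fun x y w => / g x y w)).
  { intros x y w.
    apply (continuous_comp (fun p : R * R * R => g (fst (fst p)) (snd (fst p)) (snd p)) Rinv).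
    - apply Hg.
    - apply continuous_Rinv, Rlt_not_eq, Hneg. }
  destruct (cont3_bounded_on_cube _ Hinv r) as [K [HK0 HK]].
  exists (/ K); split; [apply Rinv_0_lt_compat, HK0|].
  intros x y w Hx Hy Hw; pose proof (Hneg x y w).
  rewrite <- (Rinv_inv (- g x y w)).
  apply Rinv_le_contravar; [apply Rinv_0_lt_compat; lra|].
  rewrite <- (Rabs_left (g x y w)), <- Rabs_inv by lra; auto.
Qed.

Lemma MVT_derive (h dh : R -> R) (Hd : forall x, is_derive h x (dh x)) (a b : R) :
  exists c, Rmin a b <= c <= Rmax a b /\ h b - h a = dh c * (b - a).
Proof.
  apply MVT_gen; intros x _; [apply Hd|].
  apply continuity_pt_filterlim, (ex_derive_continuous h).
  exists (dh x); apply Hd.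
Qed.

Lemma Rabs_between_le (a b x r : R) :
  Rabs a <= r -> Rabs b <= r -> Rmin a b <= x <= Rmax a b -> Rabs x <= r.
Proof.
  intros Ha Hb Hx; apply Rabs_le_between in Ha, Hb; apply Rabs_le.
  split; [eapply Rle_trans, Hx| eapply Rle_trans; [apply Hx|]];
    [apply Rmin_glb| apply Rmax_lub]; lra.
Qed.

Lemma increment_lower_bound (a b d h L m : R) :
  0 < a -> a <= L -> 0 < m -> m <= b -> 0 <= h -> (1 + a) * d = b * h ->
  m / (1 + L) * h <= d.
Proof.
  intros Ha HaL Hm Hmb Hh E.
  assert (Hd : 0 <= d) by nra.
  apply (Rmult_le_reg_l (1 + L)); [lra|].
  replace ((1 + L) * (m / (1 + L) * h)) with (m * h) by (field; lra).
  nra.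
Qed.

Section ImplicitTheta.

Variables (Q Theta f1 f2 : R -> R -> R -> R).
Hypothesis Q_derive_th : forall x y w, is_derive (fun a => Q a y w) x (f1 x y w).
Hypothesis Q_derive_z : forall x y w, is_derive (fun a => Q x a w) y (f2 x y w).
Hypothesis f1_pos : forall x y w, 0 < f1 x y w.
Hypothesis f2_neg : forall x y w, f2 x y w < 0.
Hypothesis Theta_solves : forall w z t, Theta w z t + Q (Theta w z t) z t = w.

Lemma Theta_abs_le (w z t : R) : Rabs (Theta w z t) <= Rabs w + Rabs (Q 0 z t).
Proof.
  set (th := Theta w z t).
  destruct (MVT_derive _ _ (fun x => Q_derive_th x z t) 0 th) as [e [_ He]].
  assert (E : th * (1 + f1 e z t) = w - Q 0 z t).
  { pose proof (Theta_solves w z t) as Hs; fold th in Hs; lra. }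
  pose proof (f1_pos e z t).
  apply (Rle_trans _ (Rabs th * (1 + f1 e z t))).
  - pose proof (Rabs_pos th); nra.
  - rewrite <- (Rabs_pos_eq (1 + f1 e z t)) by lra.
    rewrite <- Rabs_mult, E, <- (Rabs_Ropp (Q 0 z t)). apply Rabs_triang.
Qed.

Lemma Theta_increment_mvt (w z1 z2 t : R) :
  exists eta zeta,
    Rmin (Theta w z1 t) (Theta w z2 t) <= eta <= Rmax (Theta w z1 t) (Theta w z2 t) /\
    Rmin z1 z2 <= zeta <= Rmax z1 z2 /\
    (1 + f1 eta z2 t) * (Theta w z2 t - Theta w z1 t)
      = - f2 (Theta w z1 t) zeta t * (z2 - z1).
Proof.
  set (a := Theta w z1 t); set (b := Theta w z2 t).
  destruct (MVT_derive _ _ (fun x => Q_derive_th x z2 t) a b) as [eta [Heta Eeta]].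
  destruct (MVT_derive _ _ (fun y => Q_derive_z a y t) z1 z2) as [zeta [Hzeta Ezeta]].
  exists eta, zeta; repeat split; try apply Heta; try apply Hzeta.
  pose proof (Theta_solves w z1 t) as Ha; pose proof (Theta_solves w z2 t) as Hb.
  fold a in Ha; fold b in Hb; lra.
Qed.

Lemma Theta_lower_lipschitz (M T : R) :
  cont3 Q -> cont3 f1 -> cont3 f2 ->
  exists k, 0 < k /\ forall w z1 z2 t, Rabs w <= M -> 0 <= z1 <= z2 -> z2 <= 1 ->
    0 <= t <= T -> k * (z2 - z1) <= Theta w z2 t - Theta w z1 t.
Proof.
  intros HQ Hf1 Hf2.
  destruct (cont3_bounded_on_cube Q HQ (1 + Rabs T)) as [KQ [HKQ0 HKQ]].
  set (r := Rabs M + KQ + 1 + Rabs T).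
  destruct (cont3_bounded_on_cube f1 Hf1 r) as [L [HL0 HL]].
  destruct (cont3_neg_bounded_away f2 r Hf2 f2_neg) as [m [Hm0 Hm]].
  exists (m / (1 + L)); split; [apply Rdiv_lt_0_compat; lra|].
  intros w z1 z2 t Hw Hz Hz2 Ht.
  pose proof (Rabs_pos M); pose proof (Rle_abs M); pose proof (Rabs_pos T); pose proof (Rle_abs T).
  assert (Hr_z : forall z, 0 <= z <= 1 -> Rabs z <= r) by (intros; apply Rabs_le; unfold r; lra).
  assert (Hr_t : Rabs t <= r) by (apply Rabs_le; unfold r; lra).
  assert (Hr_Theta : forall z, 0 <= z <= 1 -> Rabs (Theta w z t) <= r).
  { intros z Hz'; pose proof (Theta_abs_le w z t).
    pose proof (HKQ 0 z t ltac:(rewrite Rabs_R0; lra) ltac:(apply Rabs_le; lra)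
      ltac:(apply Rabs_le; lra)).
    unfold r; lra. }
  destruct (Theta_increment_mvt w z1 z2 t) as [eta [zeta [Heta [Hzeta E]]]].
  rewrite Rmin_left, Rmax_right in Hzeta by lra.
  apply (increment_lower_bound (f1 eta z2 t) (- f2 (Theta w z1 t) zeta t));
    [apply f1_pos| | exact Hm0| | lra| exact E].
  - eapply Rle_trans; [apply Rle_abs| apply HL; [| |exact Hr_t]].
    + apply (Rabs_between_le (Theta w z1 t) (Theta w z2 t)); auto; apply Hr_Theta; lra.
    + apply Hr_z; lra.
  - apply Hm; [apply Hr_Theta; lra| apply Hr_z; lra| exact Hr_t].
Qed.

End ImplicitTheta.

Lemma smooth_Theta_lower_lipschitz (Q Theta : R -> R -> R -> R) (M T : R) :
  smooth3 Q ->
  (forall th z t, Derive (fun a => Q a z t) th > 0) ->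
  (forall th z t, Derive (fun a => Q th a t) z < 0) ->
  (forall w z t, Theta w z t + Q (Theta w z t) z t = w) ->
  exists k, 0 < k /\ forall w z1 z2 t, Rabs w <= M -> 0 <= z1 <= z2 -> z2 <= 1 ->
    0 <= t <= T -> k * (z2 - z1) <= Theta w z2 t - Theta w z1 t.
Proof.
  intros HQ HQth HQz HTheta.
  destruct (HQ 1%nat) as [HQc [f1 [f2 [_ [D1 [D2 [_ [Hf1 [Hf2 _]]]]]]]]].
  apply (Theta_lower_lipschitz Q Theta f1 f2 D1 D2); auto.
  - intros x y w; rewrite <- (is_derive_unique _ _ _ (D1 x y w)); apply HQth.
  - intros x y w; rewrite <- (is_derive_unique _ _ _ (D2 x y w)); apply HQz.
Qed.

Definition move_src (istar m i : nat) : nat :=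
  if orb (i <? istar)%nat (m <? i)%nat then i else if (i =? m)%nat then istar else S i.

Ltac move_src_cases istar m i :=
  unfold move_src; destruct (Nat.ltb_spec i istar), (Nat.ltb_spec m i), (Nat.eqb_spec i m);
  simpl.

Lemma move_par (c : config) (istar m : nat) (v : R) (i : nat) :
  par (move c istar m v) i = par c (move_src istar m i).
Proof. unfold move; simpl; move_src_cases istar m i; reflexivity. Qed.

Lemma move_val_m (c : config) (istar m : nat) (v : R) :
  (istar <= m)%nat -> val (move c istar m v) m = v.
Proof.
  intros H; unfold move; simpl.
  destruct (Nat.ltb_spec m istar), (Nat.ltb_spec m m); simpl; try lia.
  now rewrite Nat.eqb_refl.
Qed.

Lemma move_val_other (c : config) (istar m : nat) (v : R) (i : nat) :
  i <> m -> val (move c istar m v) i = val c (move_src istar m i).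
Proof.
  intros H; unfold move; simpl; move_src_cases istar m i; reflexivity || lia.
Qed.

Lemma move_src_m (istar m : nat) : (istar <= m)%nat -> move_src istar m m = istar.
Proof. intros; move_src_cases istar m m; lia. Qed.

Lemma move_src_ge (istar m i : nat) : i <> m -> (i <= move_src istar m i)%nat.
Proof. intros; move_src_cases istar m i; lia. Qed.

Section MoveBijection.

Variables (n istar m : nat).
Hypothesis istar_pos : (1 <= istar)%nat.
Hypothesis istar_le_m : (istar <= m)%nat.
Hypothesis m_le_n : (m <= n)%nat.

Lemma move_src_range (i : nat) : (1 <= i <= n)%nat -> (1 <= move_src istar m i <= n)%nat.
Proof. intros; move_src_cases istar m i; lia. Qed.

Lemma move_src_inj (i1 i2 : nat) : (1 <= i1 <= n)%nat -> (1 <= i2 <= n)%nat ->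
  move_src istar m i1 = move_src istar m i2 -> i1 = i2.
Proof.
  intros Hi1 Hi2; move_src_cases istar m i1; move_src_cases istar m i2; lia.
Qed.

Lemma move_src_surj (i0 : nat) : (1 <= i0 <= n)%nat ->
  exists i, (1 <= i <= n)%nat /\ move_src istar m i = i0.
Proof.
  intros Hi0.
  destruct (Nat.lt_ge_cases i0 istar); [exists i0; split; [lia|]; move_src_cases istar m i0; lia|].
  destruct (Nat.lt_ge_cases m i0); [exists i0; split; [lia|]; move_src_cases istar m i0; lia|].
  destruct (Nat.eq_dec i0 istar) as [->|].
  - exists m; split; [lia|]; move_src_cases istar m m; lia.
  - exists (i0 - 1)%nat; split; [lia|]; move_src_cases istar m (i0 - 1)%nat; lia.
Qed.

End MoveBijection.

Lemma zpos_le (n i j : nat) : (1 <= n)%nat -> (i <= j)%nat -> zpos n i <= zpos n j.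
Proof.
  intros Hn Hij; unfold zpos, Rdiv; apply Rmult_le_compat_r.
  - left; apply Rinv_0_lt_compat, lt_0_INR; lia.
  - apply le_INR, Hij.
Qed.

Lemma zpos_unit_interval (n i : nat) : (1 <= n)%nat -> (i <= n)%nat -> 0 <= zpos n i <= 1.
Proof.
  intros Hn Hi; split.
  - unfold zpos; apply Rdiv_le_0_compat; [apply pos_INR| apply lt_0_INR; lia].
  - replace 1 with (zpos n n) by (unfold zpos; field; apply not_0_INR; lia).
    apply zpos_le; assumption.
Qed.

Lemma ltbR_true (x y : R) : ltbR x y = true -> x < y.
Proof. unfold ltbR; destruct (Rlt_dec x y); [auto| discriminate]. Qed.

Lemma select_eligible (Theta : R -> R -> R -> R) (n : nat) (th0 q : nat -> R) (tau : R)
  (c : config) (m istar : nat) :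
  select Theta n th0 q tau c m = Some istar ->
  (1 <= istar <= m)%nat /\ eligible Theta n th0 q tau c m istar = true.
Proof.
  unfold select.
  set (ok := fun j => (1 <= j <= m)%nat /\ eligible Theta n th0 q tau c m j = true).
  assert (Hfold : forall l acc, (forall i, In i l -> (1 <= i <= m)%nat) ->
    (forall j, acc = Some j -> ok j) ->
    forall j, fold_left (fun acc i =>
      if eligible Theta n th0 q tau c m i then
        match acc with
        | None => Some i
        | Some j => if Rle_dec (thM th0 q (par c j)) (thM th0 q (par c i)) then Some i else acc
        end
      else acc) l acc = Some j -> ok j).
  { induction l as [|a l IH]; simpl; intros acc Hl Hacc; [exact Hacc|].
    apply IH; [intros i Hi; apply Hl; right; exact Hi|].
    destruct (eligible Theta n th0 q tau c m a) eqn:Ea; [|exact Hacc].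
    assert (Hnew : ok a) by (split; [apply Hl; left|]; auto).
    destruct acc as [j'|]; [destruct (Rle_dec _ _)|];
      intros j Hj; injection Hj as <-; auto. }
  apply Hfold; [| discriminate].
  intros i Hi; apply in_seq in Hi; lia.
Qed.

Section ParcelScheme.

Variables (Theta : R -> R -> R -> R) (n : nat) (th0 q : nat -> R) (k : R).

Definition parcel_perm (c : config) : Prop :=
  (forall i, (1 <= i <= n)%nat -> (1 <= par c i <= n)%nat) /\
  (forall i1 i2, (1 <= i1 <= n)%nat -> (1 <= i2 <= n)%nat -> par c i1 = par c i2 -> i1 = i2) /\
  (forall p, (1 <= p <= n)%nat -> exists i, (1 <= i <= n)%nat /\ par c i = p).

Lemma stage_perm (tau : R) (c : config) (m : nat) :
  parcel_perm c -> (m <= n)%nat -> parcel_perm (stage Theta n th0 q tau c m).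
Proof.
  intros [Hrange [Hinj Hsurj]] Hm; unfold stage.
  destruct (select Theta n th0 q tau c m) as [istar|] eqn:Hs; [|now split].
  apply select_eligible in Hs as [Hi _].
  split; [|split].
  - intros i Hi'; rewrite move_par; apply Hrange, move_src_range; lia.
  - intros i1 i2 K1 K2; rewrite !move_par; intros E.
    apply Hinj in E; try (apply move_src_range; lia).
    apply (move_src_inj n istar m) in E; lia.
  - intros p Hp; destruct (Hsurj p Hp) as [i0 [Hi0 E]].
    destruct (move_src_surj n istar m ltac:(lia) ltac:(lia) ltac:(lia) i0 Hi0) as [i [Hi' E']].
    exists i; split; [exact Hi'|]; rewrite move_par, E'; exact E.
Qed.

Lemma run_stages_perm (tau : R) (c : config) (m : nat) :
  parcel_perm c -> (m <= n)%nat -> parcel_perm (run_stages Theta n th0 q tau c m).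
Proof.
  revert c; induction m as [|m IH]; intros c Hc Hm; simpl; [exact Hc|].
  apply IH; [apply stage_perm|]; auto; lia.
Qed.

Lemma cfg_at_perm (dt : R) (j : nat) : parcel_perm (cfg_at Theta n dt th0 q j).
Proof.
  induction j as [|j IH]; simpl.
  - split; [|split]; simpl; auto. intros p Hp; exists p; auto.
  - now apply run_stages_perm.
Qed.

Hypothesis n_pos : (1 <= n)%nat.
Hypothesis k_nonneg : 0 <= k.

Definition gain_dominates (c1 c2 : config) : Prop :=
  forall i1 i2, (1 <= i1 <= n)%nat -> (1 <= i2 <= n)%nat -> par c1 i1 = par c2 i2 ->
    k * Rmax 0 (zpos n i2 - zpos n i1) <= val c2 i2 - val c1 i1.

Lemma gain_dominates_refl (c : config) : parcel_perm c -> gain_dominates c c.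
Proof.
  intros [_ [Hinj _]] i1 i2 H1 H2 E; rewrite (Hinj _ _ H1 H2 E).
  rewrite Rminus_diag, Rmax_left by lra; lra.
Qed.

Lemma gain_dominates_trans (c1 c2 c3 : config) :
  parcel_perm c1 -> parcel_perm c2 ->
  gain_dominates c1 c2 -> gain_dominates c2 c3 -> gain_dominates c1 c3.
Proof.
  intros [Hrange1 _] [_ [_ Hsurj2]] G12 G23 i1 i3 H1 H3 E.
  destruct (Hsurj2 (par c1 i1) (Hrange1 _ H1)) as [i2 [H2 E2]].
  pose proof (G12 i1 i2 H1 H2 (eq_sym E2)).
  pose proof (G23 i2 i3 H2 H3 (eq_trans E2 E)).
  assert (Hsub : Rmax 0 (zpos n i3 - zpos n i1)
    <= Rmax 0 (zpos n i2 - zpos n i1) + Rmax 0 (zpos n i3 - zpos n i2))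
    by (unfold Rmax; repeat destruct Rle_dec; lra).
  pose proof (Rmult_le_compat_l k _ _ k_nonneg Hsub). lra.
Qed.

Definition Theta_grid_lower (tau : R) : Prop :=
  forall p i1 i2, (1 <= p <= n)%nat -> (1 <= i1)%nat -> (i1 <= i2)%nat -> (i2 <= n)%nat ->
    k * (zpos n i2 - zpos n i1) <=
    Theta (thM th0 q p) (zpos n i2) tau - Theta (thM th0 q p) (zpos n i1) tau.

Lemma stage_gain (tau : R) (c : config) (m : nat) :
  Theta_grid_lower tau -> parcel_perm c -> (1 <= m <= n)%nat ->
  gain_dominates c (stage Theta n th0 q tau c m).
Proof.
  intros Hgrid Hc Hm; unfold stage.
  destruct (select Theta n th0 q tau c m) as [istar|] eqn:Hs; [|now apply gain_dominates_refl].
  apply select_eligible in Hs as [Hi He].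
  apply andb_prop in He as [Hwet _]; apply ltbR_true in Hwet.
  destruct Hc as [Hrange [Hinj _]].
  intros i1 i2 H1 H2 E; rewrite move_par in E.
  apply Hinj in E; [subst i1| exact H1| apply move_src_range; lia].
  destruct (Nat.eq_dec i2 m) as [->|Hne].
  - rewrite move_val_m, move_src_m by lia.
    pose proof (zpos_le n istar m n_pos ltac:(lia)).
    pose proof (Hgrid (par c istar) istar m (Hrange istar ltac:(lia)) ltac:(lia) ltac:(lia)
      ltac:(lia)).
    rewrite Rmax_right; lra.
  - rewrite move_val_other by exact Hne.
    pose proof (zpos_le n _ _ n_pos (move_src_ge istar m i2 Hne)).
    rewrite Rmax_left; lra.
Qed.

Lemma run_stages_gain (tau : R) (c : config) (m : nat) :
  Theta_grid_lower tau -> parcel_perm c -> (m <= n)%nat ->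
  gain_dominates c (run_stages Theta n th0 q tau c m).
Proof.
  intros Hgrid; revert c; induction m as [|m IH]; intros c Hc Hm; simpl.
  - now apply gain_dominates_refl.
  - assert (Hc' : parcel_perm (stage Theta n th0 q tau c (S m))) by (apply stage_perm; auto).
    apply gain_dominates_trans with (1 := Hc) (2 := Hc').
    + apply stage_gain; auto; lia.
    + apply IH; auto; lia.
Qed.

Lemma cfg_at_gain (dt T : R) (j1 j2 : nat) :
  0 <= dt -> (forall tau, 0 <= tau <= T -> Theta_grid_lower tau) ->
  (j1 <= j2)%nat -> INR j2 * dt <= T ->
  gain_dominates (cfg_at Theta n dt th0 q j1) (cfg_at Theta n dt th0 q j2).
Proof.
  intros Hdt Hgrid; induction j2 as [|j2 IH]; intros Hj Hj2.
  - replace j1 with 0%nat by lia. apply gain_dominates_refl, cfg_at_perm.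
  - destruct (Nat.eq_dec j1 (S j2)) as [->|Hne]; [apply gain_dominates_refl, cfg_at_perm|].
    rewrite S_INR in Hj2; pose proof (pos_INR j2).
    apply gain_dominates_trans with (cfg_at Theta n dt th0 q j2); try apply cfg_at_perm.
    + apply IH; [lia| nra].
    + apply run_stages_gain; [|apply cfg_at_perm| lia].
      apply Hgrid; split; [|rewrite S_INR; lra]. apply Rmult_le_pos; [apply pos_INR| exact Hdt].
Qed.

End ParcelScheme.

Lemma alpha_spec (n : nat) (c : config) (j : nat) :
  parcel_perm n c -> (1 <= j <= n)%nat ->
  (1 <= alpha n c j <= n)%nat /\ par c (alpha n c j) = j.
Proof.
  intros [_ [_ Hsurj]] Hj; destruct (Hsurj j Hj) as [i0 [Hi0 E0]].
  assert (Hfind : forall l, (exists i, In i l /\ par c i = j) ->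
    let a := fold_right (fun i acc => if (par c i =? j)%nat then i else acc) 0%nat l in
    In a l /\ par c a = j).
  { induction l as [|i l IH]; intros [i' [Hi' Ei']]; [destruct Hi'|]; simpl.
    destruct (Nat.eqb_spec (par c i) j) as [Ei|Ni]; [auto|].
    destruct Hi' as [<-|Hi']; [contradiction|].
    destruct (IH (ex_intro _ i' (conj Hi' Ei'))) as [A B]; auto. }
  destruct (Hfind (seq 1 n)) as [A B]; [exists i0; split; [apply in_seq; lia| exact E0]|].
  apply in_seq in A; unfold alpha; split; [lia| exact B].
Qed.

Lemma cell_range (n : nat) (z : R) : (1 <= n)%nat -> 0 <= z < 1 -> (1 <= cell n z <= n)%nat.
Proof.
  intros Hn Hz; unfold cell.
  assert (HN : 0 < INR n) by (apply lt_0_INR; lia).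
  destruct (base_Int_part (INR n * z)) as [B1 B2].
  assert (H0 : (-1 < Int_part (INR n * z))%Z) by (apply lt_IZR; simpl; nra).
  assert (H1 : (Int_part (INR n * z) < Z.of_nat n)%Z)
    by (apply lt_IZR; rewrite <- INR_IZR_INZ; nra).
  lia.
Qed.

Lemma cell_shift (n : nat) (z : R) (a : nat) :
  (1 <= n)%nat -> 0 <= z < 1 -> (1 <= a)%nat ->
  cell n (z - zpos n (cell n z) + zpos n a) = a.
Proof.
  intros Hn Hz Ha; unfold cell.
  assert (HN : 0 < INR n) by (apply lt_0_INR; lia).
  destruct (base_Int_part (INR n * z)) as [B1 B2].
  set (I := Int_part (INR n * z)) in B1, B2 |- *.
  assert (HI : (-1 < I)%Z) by (apply lt_IZR; simpl; nra).
  assert (EJ : INR (S (Z.to_nat I)) = IZR I + 1)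
    by (rewrite S_INR, INR_IZR_INZ, Z2Nat.id by lia; reflexivity).
  unfold zpos; rewrite EJ.
  replace (INR n * (z - (IZR I + 1) / INR n + INR a / INR n))
    with (INR n * z - IZR I - 1 + INR a) by (field; lra).
  rewrite <- (Int_part_spec _ (Z.of_nat a - 1)); [lia|].
  rewrite minus_IZR, <- INR_IZR_INZ; simpl; lra.
Qed.

Lemma kidx_le (dt s t : R) : 0 < dt -> 0 <= s -> s <= t -> (kidx dt s <= kidx dt t)%nat.
Proof.
  intros Hdt Hs Hst; unfold kidx.
  assert (Hsd : 0 <= s / dt) by (apply Rdiv_le_0_compat; lra).
  assert (Htd : s / dt <= t / dt)
    by (apply Rmult_le_compat_r; [left; apply Rinv_0_lt_compat|]; lra).
  destruct (base_Int_part (s / dt)); destruct (base_Int_part (t / dt)).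
  assert ((Int_part (s / dt) <= Int_part (t / dt))%Z).
  { assert ((Int_part (s / dt) < Int_part (t / dt) + 1)%Z)
      by (apply lt_IZR; rewrite plus_IZR; simpl; lra).
    lia. }
  lia.
Qed.

Lemma kidx_time_le (dt t : R) : 0 < dt -> 0 <= t -> INR (kidx dt t) * dt <= t.
Proof.
  intros Hdt Ht; unfold kidx.
  destruct (base_Int_part (t / dt)) as [B1 B2].
  assert ((-1 < Int_part (t / dt))%Z).
  { apply lt_IZR; assert (0 <= t / dt) by (apply Rdiv_le_0_compat; lra); simpl; lra. }
  rewrite INR_IZR_INZ, Z2Nat.id by lia.
  apply (Rmult_le_reg_r (/ dt)); [apply Rinv_0_lt_compat; lra|].
  replace (IZR (Int_part (t / dt)) * dt * / dt) with (IZR (Int_part (t / dt))) by (field; lra).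
  exact B1.
Qed.

Lemma thM_abs_le_Mprime (n : nat) (th0 q : nat -> R) (p : nat) :
  (1 <= p <= n)%nat -> Rabs (thM th0 q p) <= Mprime n th0 q.
Proof.
  intros Hp; unfold thM, Mprime.
  assert (Hin : In p (seq 1 n)) by (apply in_seq; lia).
  pose proof (fold_Rmax_ge _ _ (in_map (fun j => Rabs (th0 j)) _ _ Hin)).
  pose proof (fold_Rmax_ge _ _ (in_map (fun j => Rabs (q j)) _ _ Hin)).
  pose proof (Rabs_triang (th0 p) (q p)); lra.
Qed.

Lemma F_n_sub (Theta : R -> R -> R -> R) (n : nat) (dt : R) (th0 q : nat -> R) (s t z : R) :
  F_n Theta n dt th0 q t z - F_n Theta n dt th0 q s z
  = zpos n (alpha n (cfg_at Theta n dt th0 q (kidx dt t)) (cell n z))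
    - zpos n (alpha n (cfg_at Theta n dt th0 q (kidx dt s)) (cell n z)).
Proof. unfold F_n; ring. Qed.

Lemma theta_hat_alpha (Theta : R -> R -> R -> R) (n : nat) (dt : R) (th0 q : nat -> R) (t z : R) :
  (1 <= n)%nat -> 0 <= z < 1 ->
  theta_hat Theta n dt th0 q t z
  = val (cfg_at Theta n dt th0 q (kidx dt t))
      (alpha n (cfg_at Theta n dt th0 q (kidx dt t)) (cell n z)).
Proof.
  intros Hn Hz; unfold theta_hat, theta_n, F_n.
  destruct (alpha_spec n _ (cell n z) (cfg_at_perm Theta n th0 q dt (kidx dt t))
    (cell_range n z Hn Hz)) as [Ha _].
  rewrite cell_shift by (auto; lia); reflexivity.
Qed.

Theorem lemma4p13 (Q Theta : R -> R -> R -> R)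
  (HQ : smooth3 Q)
  (HQth : forall th z t, Derive (fun a => Q a z t) th > 0)
  (HQz : forall th z t, Derive (fun a => Q th a t) z < 0)
  (HTheta : forall w z t, Theta w z t + Q (Theta w z t) z t = w)
  (HThw : forall w z t, exists d, is_derive (fun a => Theta a z t) w d /\ 0 < d)
  (HThz : forall w z t, exists d, is_derive (fun a => Theta w a t) z d /\ 0 < d)
  (T M' : R) (HT : 0 < T) :
  exists C : R, 0 < C /\
    forall (n : nat) (dt : R) (th0 q : nat -> R),
      (1 <= n)%nat -> 0 < dt ->
      (forall j, (1 <= j)%nat -> (j < n)%nat -> th0 j <= th0 (S j)) ->
      (forall j, (1 <= j)%nat -> (j <= n)%nat -> q j <= Q (th0 j) (zpos n j) 0) ->
      Mprime n th0 q = M' ->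
      forall s t z, 0 <= s -> s < t -> t < T -> 0 <= z < 1 ->
        Rmax 0 (F_n Theta n dt th0 q t z - F_n Theta n dt th0 q s z)
        <= C * (theta_hat Theta n dt th0 q t z - theta_hat Theta n dt th0 q s z).
Proof.
  destruct (smooth_Theta_lower_lipschitz Q Theta M' T HQ HQth HQz HTheta) as [k [Hk Hlip]].
  exists (/ k); split; [apply Rinv_0_lt_compat, Hk|].
  intros n dt th0 q Hn Hdt _ _ HM s t z Hs Hst HtT Hz.
  assert (Hgrid : forall tau, 0 <= tau <= T -> Theta_grid_lower Theta n th0 q k tau).
  { intros tau Htau p i1 i2 Hp Hi1 Hi12 Hi2.
    pose proof (zpos_unit_interval n i1 Hn ltac:(lia)).
    pose proof (zpos_unit_interval n i2 Hn Hi2).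
    apply Hlip; [rewrite <- HM; apply thM_abs_le_Mprime| split; [|apply zpos_le]| |]; auto; lra. }
  pose proof (kidx_time_le dt t Hdt ltac:(lra)).
  assert (Hgain := cfg_at_gain Theta n th0 q k Hn ltac:(lra) dt T (kidx dt s) (kidx dt t)
    ltac:(lra) Hgrid (kidx_le dt s t Hdt Hs ltac:(lra)) ltac:(lra)).
  set (j := cell n z).
  destruct (alpha_spec n _ j (cfg_at_perm Theta n th0 q dt (kidx dt s)) (cell_range n z Hn Hz))
    as [Hs_range Hs_par].
  destruct (alpha_spec n _ j (cfg_at_perm Theta n th0 q dt (kidx dt t)) (cell_range n z Hn Hz))
    as [Ht_range Ht_par].
  rewrite F_n_sub, !theta_hat_alpha by auto; fold j.
  apply (Rmult_le_reg_l k); [exact Hk|]; rewrite <- Rmult_assoc, Rinv_r, Rmult_1_l by lra.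
  apply Hgain; [exact Hs_range| exact Ht_range| congruence].
Qed.
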